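(* Let $N$ be a finite-dimensional Hilbert space, let $S$ be the operator in $\ell_2(\mathbb{Z},N)$ defined below, and let $J$ be a fundamental symmetry in $\ell_2(\mathbb{Z},N)$ commuting with $S$, of the form $(J(x_k))_k=J_-x_k$ for $k\le0$ and $(J(x_k))_k=J_+x_k$ for $k\ge1$ with fundamental symmetries $J_\pm$ in $N$. Then there exist self-adjoint extensions of $S$ commuting with $J$ if and only if $\dim[(I-J_+)N]=\dim[(I-J_-)N]$.
   Context: Let $A$ be the operator in $\ell_2(\mathbb{Z},N)$ with domain consisting of all sequences $f=(f_k)_{k\in\mathbb{Z}}$ of the form $f_k=x_{k-1}-x_k$ with $(x_k)\in\ell_2(\mathbb{Z},N)$, acting by $(Af)_k=i(x_{k-1}+x_k)$; $S$ is the restriction of $A$ to those $f$ with $x_0=0$. A fundamental symmetry is a bounded $J$ with $J=J^*$, $J^2=I$. An operator $B$ commutes with $J$ if $J\mathcal{D}(B)\subset\mathcal{D}(B)$ and $JBu=BJu$ for $u\in\mathcal{D}(B)$. *)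

From HB Require Import structures.
From mathcomp Require Import all_boot all_order all_algebra.
From mathcomp Require Import all_classical all_reals all_analysis.
From mathcomp Require Import complex.
Import numFieldNormedType.Exports.
Set Implicit Arguments. Unset Strict Implicit. Unset Printing Implicit Defensive.
Import Order.TTheory GRing.Theory Num.Theory.
Local Open Scope ring_scope.

Section Defs.
Variables (R : realType) (n : nat).
Local Notation C := (complex R).

(* N = C^n (column vectors), standard inner product *)
Definition vdot (u v : 'cV[C]_n) : C := \sum_(i < n) u i 0 * conjc (v i 0).
Definition vsqn (u : 'cV[C]_n) : R := \sum_(i < n) (complex.Re (u i 0) ^+ 2 + complex.Im (u i 0) ^+ 2).

Definition zseq := int -> 'cV[C]_n.

(* symmetric partial sums over k in [-m, m] *)
Definition zpsum (T : nmodType) (F : int -> T) (m : nat) : T :=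
  \sum_(j < (2 * m).+1) F (j%:Z - m%:Z).

Definition l2 (x : zseq) : Prop :=
  exists M : R, forall m : nat, zpsum (fun k => vsqn (x k)) m <= M.

Definition ip (x y : zseq) : C :=
  Complex (limn (fun m : nat => (complex.Re (zpsum (fun k => vdot (x k) (y k)) m) : R)))
          (limn (fun m : nat => (complex.Im (zpsum (fun k => vdot (x k) (y k)) m) : R))).

Record op := Op { dom : zseq -> Prop; act : zseq -> zseq }.

Definition is_op_in_l2 (B : op) : Prop :=
  forall f, dom B f -> l2 f /\ l2 (act B f).

Definition adj_graph (B : op) (g h : zseq) : Prop :=
  l2 g /\ l2 h /\ forall f, dom B f -> ip (act B f) g = ip f h.

Definition selfadjoint (B : op) : Prop :=
  is_op_in_l2 B /\ forall g h, adj_graph B g h <-> (dom B g /\ act B g = h).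

Definition S_graph (f g : zseq) : Prop :=
  exists x : zseq, l2 x /\ x 0 = 0 /\
    f = (fun k => x (k - 1) - x k) /\
    g = (fun k => (Complex 0 1) *: (x (k - 1) + x k)).

Definition extends_S (B : op) : Prop :=
  forall f g, S_graph f g -> dom B f /\ act B f = g.

Definition fund_sym (J : 'M[C]_n) : Prop :=
  (map_mx (@conjc R) J)^T = J /\ J *m J = 1%:M.

Definition Jop (Jm Jp : 'M[C]_n) (x : zseq) : zseq :=
  fun k => if (k <= 0)%R then Jm *m x k else Jp *m x k.

Definition J_commutes_S (Jm Jp : 'M[C]_n) : Prop :=
  forall f g, S_graph f g -> S_graph (Jop Jm Jp f) (Jop Jm Jp g).

Definition J_commutes (Jm Jp : 'M[C]_n) (B : op) : Prop :=
  forall u, dom B u -> dom B (Jop Jm Jp u) /\ Jop Jm Jp (act B u) = act B (Jop Jm Jp u).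

End Defs.

From HB Require Import structures.
From mathcomp Require Import all_boot all_order all_algebra.
From mathcomp Require Import all_classical all_reals all_analysis.
From mathcomp Require Import complex.
From mathcomp Require Import ring lra zify.
Import Order.TTheory GRing.Theory Num.Theory.
Import numFieldNormedType.Exports.
Set Implicit Arguments. Unset Strict Implicit. Unset Printing Implicit Defensive.
Local Open Scope ring_scope.

(* Write a pair (f, g) of l2 sequences as f = z - w, g = i (z + w); for the graph
   of S, z_k = x_(k-1) and w_k = x_k.  The graph of the adjoint S^* consists of
   the pairs with w_k = z_(k+1) for all k <> 0, and summation by parts (Green's
   identity) turns <g, f'> - <f, g'> into the boundary form
   2i (<z_1, z_1'> - <w_0, w_0'>) on N x N.  The self-adjoint extensions of S
   are therefore the restrictions of S^* to w_0 = U z_1 with U unitary on N,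
   and such an extension commutes with J iff J_- U = U J_+.  A unitary U with
   J_- U = U J_+ exists iff J_- and J_+ have (-1)-eigenspaces (I - J_-)N and
   (I - J_+)N of the same dimension; conversely, the boundary values of any
   J-commuting self-adjoint extension form the graph of such a unitary. *)

Section ComplexParts.
Variable R : realType.
Local Notation C := R[i].

Lemma ReD (a b : C) : complex.Re (a + b) = complex.Re a + complex.Re b.
Proof. by case: a; case: b. Qed.
Lemma ImD (a b : C) : complex.Im (a + b) = complex.Im a + complex.Im b.
Proof. by case: a; case: b. Qed.
Lemma ReN (a : C) : complex.Re (- a) = - complex.Re a. Proof. by case: a. Qed.
Lemma ImN (a : C) : complex.Im (- a) = - complex.Im a. Proof. by case: a. Qed.
Lemma ReB (a b : C) : complex.Re (a - b) = complex.Re a - complex.Re b.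
Proof. by rewrite ReD ReN. Qed.
Lemma ImB (a b : C) : complex.Im (a - b) = complex.Im a - complex.Im b.
Proof. by rewrite ImD ImN. Qed.

Lemma Re_sum (I : Type) (r : seq I) (P : pred I) (F : I -> C) :
  complex.Re (\sum_(i <- r | P i) F i) = \sum_(i <- r | P i) complex.Re (F i).
Proof. exact: (big_morph _ ReD erefl). Qed.
Lemma Im_sum (I : Type) (r : seq I) (P : pred I) (F : I -> C) :
  complex.Im (\sum_(i <- r | P i) F i) = \sum_(i <- r | P i) complex.Im (F i).
Proof. exact: (big_morph _ ImD erefl). Qed.

Lemma complex_ext (a b : C) :
  complex.Re a = complex.Re b -> complex.Im a = complex.Im b -> a = b.
Proof. by case: a => ? ?; case: b => ? ? /= -> ->. Qed.

Lemma conjc_i : conjc ('i : C) = - 'i.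
Proof. by apply: complex_ext; rewrite ?ReN ?ImN /= ?oppr0. Qed.

Lemma Re_mul2i (x : C) : complex.Re (2 * 'i * x) = -2 * complex.Im x.
Proof. by case: x => a b /=; ring. Qed.
Lemma Im_mul2i (x : C) : complex.Im (2 * 'i * x) = 2 * complex.Re x.
Proof. by case: x => a b /=; ring. Qed.

Lemma mul2i_neq0 : (2 * 'i : C) != 0.
Proof. by rewrite mulf_neq0 ?neq0Ci // pnatr_eq0. Qed.

Lemma mul2i_eq0 (x : C) : 2 * 'i * x = 0 -> x = 0.
Proof. by move/eqP; rewrite mulf_eq0 (negbTE mul2i_neq0) => /eqP. Qed.

End ComplexParts.

Section SymmetricSums.
Variable T : nmodType.
Implicit Type F : int -> T.

Lemma zpsum0 F : zpsum F 0 = F 0.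
Proof. by rewrite /zpsum big_ord1. Qed.

Lemma zpsumS F m : zpsum F m.+1 = zpsum F m + F (- (m.+1)%:Z) + F (m.+1)%:Z.
Proof.
rewrite /zpsum.
have -> : (2 * m.+1).+1 = ((2 * m).+1).+1.+1 by rewrite mulnS.
rewrite big_ord_recl big_ord_recr /= addrA [F _ + _]addrC; congr (_ + _ + _).
- by apply: eq_bigr => i _; congr F; rewrite /bump /= add1n !intS; lia.
- by congr F; lia.
- by congr F; rewrite /bump /=; lia.
Qed.

Lemma zpsumD F G m : zpsum (fun k => F k + G k) m = zpsum F m + zpsum G m.
Proof. by rewrite /zpsum big_split. Qed.

Lemma eq_zpsum F G m : (forall k, F k = G k) -> zpsum F m = zpsum G m.
Proof. by move=> e; apply: eq_bigr => i _; rewrite e. Qed.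

Lemma zpsum_delta (a : int) (c : T) m : (`|a| <= m)%N ->
  zpsum (fun k => if k == a then c else 0) m = c.
Proof.
move=> ha; rewrite /zpsum.
have hi : (absz (a + m%:Z)%R < (2 * m).+1)%N by lia.
rewrite (bigD1 (Ordinal hi)) //= big1 ?addr0.
  by have -> : ((absz (a + m%:Z)%R)%:Z - m%:Z == a) = true by apply/eqP; lia.
move=> i hneq; case: ifP => // /eqP hE; exfalso; move/eqP: hneq; apply.
by apply: val_inj => /=; lia.
Qed.

Lemma zpsum_finsupp F K : (forall k, (K < `|k|)%N -> F k = 0) ->
  forall m, (K <= m)%N -> zpsum F m = zpsum F K.
Proof.
move=> h; elim=> [|m IH]; first by rewrite leqn0 => /eqP ->.
rewrite leq_eqVlt => /orP[/eqP -> //|]; rewrite ltnS => hKm.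
by rewrite zpsumS IH // !h ?addr0 //; lia.
Qed.

End SymmetricSums.

Lemma zpsumB (T : zmodType) (F G : int -> T) m :
  zpsum (fun k => F k - G k) m = zpsum F m - zpsum G m.
Proof. by rewrite /zpsum sumrB. Qed.

Lemma zpsum_mulr (T : pzSemiRingType) (c : T) (F : int -> T) m :
  zpsum (fun k => c * F k) m = c * zpsum F m.
Proof. by rewrite /zpsum mulr_sumr. Qed.

Section SymmetricSeries.
Local Open Scope classical_set_scope.
Variable R : realType.
Implicit Types (c t b : int -> R) (u v : nat -> R).

Lemma nondecreasing_zpsum c : (forall k, 0 <= c k) ->
  {homo zpsum c : p q / (p <= q)%N >-> p <= q}.
Proof.
move=> h; apply/nondecreasing_seqP => m; rewrite zpsumS -addrA lerDl.
exact: addr_ge0.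
Qed.

Lemma is_cvg_zpsum_ge0 c M : (forall k, 0 <= c k) ->
  (forall m, zpsum c m <= M) -> cvgn (zpsum c).
Proof.
move=> h hM; apply: nondecreasing_is_cvgn; first exact: nondecreasing_zpsum.
by exists M => _ [m _ <-].
Qed.

Lemma is_cvg_zpsum_dom t b M : (forall k, `|t k| <= b k) ->
  (forall m, zpsum b m <= M) -> cvgn (zpsum t).
Proof.
move=> htb hM.
have e : zpsum t = (fun m => zpsum (fun k => b k + t k) m - zpsum b m).
  by apply: funext => m; rewrite zpsumD addrAC subrr add0r.
have [b_ge0 bt_ge0] : (forall k, 0 <= b k) /\ (forall k, 0 <= b k + t k).
  split=> k; first exact: le_trans (htb k).
  by rewrite -lerBlDl sub0r; have := htb k; rewrite ler_norml => /andP[].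
rewrite e; apply: is_cvgB; last exact: (is_cvg_zpsum_ge0 b_ge0 hM).
apply: (is_cvg_zpsum_ge0 bt_ge0 (M := M + M)) => m; rewrite zpsumD lerD //.
apply: le_trans (hM m); apply: ler_sum => i _.
by have := htb (i%:Z - m%:Z); rewrite ler_norml => /andP[].
Qed.

Lemma cvg_eventually_cst u K a : (forall m, (K <= m)%N -> u m = a) -> u @ \oo --> a.
Proof.
move=> h; rewrite -(cvg_shiftn K).
have -> : [sequence u (m + K)%N]_m = fun=> a.
  by apply: funext => m /=; rewrite h // leq_addl.
exact: cvg_cst.
Qed.

Lemma eventually_cst_cvg0 u K a : (forall m, (K <= m)%N -> u m = a) ->
  u @ \oo --> 0 -> a = 0.
Proof. by move=> /cvg_eventually_cst ha h0; rewrite -(cvg_lim _ ha) ?(cvg_lim _ h0). Qed.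

Lemma limnB_shift_eq u v (e : nat -> R) a : cvgn u -> cvgn v ->
  (forall m, u m.+1 - v m.+1 = a + e m) -> e @ \oo --> 0 -> limn u - limn v = a.
Proof.
move=> cu cv h he; rewrite -limB //; apply: cvg_lim => //; rewrite -cvg_shiftS.
have -> : [sequence (u - v) m.+1]_m = fun m => a + e m by apply: funext => m /=; rewrite -h.
have lim_a : (fun m => a + e m) @ \oo --> a + 0 by apply: cvgD => //; exact: cvg_cst.
by rewrite addr0 in lim_a.
Qed.

Lemma cvg0_norm_le u v : (forall m, `|u m| <= v m) -> v @ \oo --> 0 -> u @ \oo --> 0.
Proof.
move=> h hv; apply: (@squeeze_cvgr _ _ _ _ (fun m => - v m) v) => //.
- by near=> m; rewrite -ler_norml; exact: h.
- by rewrite -oppr0; exact: cvgN.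
Unshelve. all: by end_near.
Qed.

Lemma zpsum_terms_cvg0 c M : (forall k, 0 <= c k) -> (forall m, zpsum c m <= M) ->
  (fun m : nat => c m%:Z) @ \oo --> 0 /\ (fun m : nat => c (- m%:Z)) @ \oo --> 0.
Proof.
move=> h hM.
have cv := is_cvg_zpsum_ge0 h hM.
have d : (fun m => zpsum c m.+1 - zpsum c m) @ \oo --> 0.
  rewrite -(subrr (limn (zpsum c))); apply: cvgB => //.
  by rewrite (cvg_shiftS (zpsum c)).
have bnd m : 0 <= c m.+1%:Z <= zpsum c m.+1 - zpsum c m /\
             0 <= c (- m.+1%:Z) <= zpsum c m.+1 - zpsum c m.
  have -> : zpsum c m.+1 - zpsum c m = c (- m.+1%:Z) + c m.+1%:Z.
    by rewrite zpsumS; ring.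
  by split; apply/andP; split; rewrite // ?lerDr ?lerDl.
split; rewrite -cvg_shiftS /=; apply: (cvg0_norm_le _ d) => m;
  by have [/andP[h0 h1] /andP[h2 h3]] := bnd m; rewrite ger0_norm.
Qed.

End SymmetricSeries.

Lemma adjmxM (C : numClosedFieldType) m n p (A : 'M[C]_(m, n)) (B : 'M[C]_(n, p)) :
  ((A *m B) ^t* = B ^t* *m A ^t*)%sesqui.
Proof. by rewrite trmx_mul map_mxM. Qed.

Section InnerProduct.
Local Open Scope sesquilinear_scope.
Variables (R : realType) (n : nat).
Local Notation C := R[i].
Local Notation V := 'cV[C]_n.

Definition nsq (c : C) : R := complex.Re c ^+ 2 + complex.Im c ^+ 2.

Lemma nsq_ge0 c : 0 <= nsq c.
Proof. by rewrite /nsq addr_ge0 // sqr_ge0. Qed.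

Lemma vsqn_ge0 (u : V) : 0 <= vsqn u.
Proof. by apply: sumr_ge0 => i _; exact: (nsq_ge0 (u i 0)). Qed.

Lemma vdotDl (u1 u2 v : V) : vdot (u1 + u2) v = vdot u1 v + vdot u2 v.
Proof. by rewrite /vdot -big_split; apply: eq_bigr => i _; rewrite mxE mulrDl. Qed.
Lemma vdotDr (u v1 v2 : V) : vdot u (v1 + v2) = vdot u v1 + vdot u v2.
Proof. by rewrite /vdot -big_split; apply: eq_bigr => i _; rewrite mxE rmorphD mulrDr. Qed.
Lemma vdotZl (a : C) (u v : V) : vdot (a *: u) v = a * vdot u v.
Proof. by rewrite /vdot mulr_sumr; apply: eq_bigr => i _; rewrite mxE mulrA. Qed.
Lemma vdotZr (a : C) (u v : V) : vdot u (a *: v) = conjc a * vdot u v.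
Proof. by rewrite /vdot mulr_sumr; apply: eq_bigr => i _; rewrite mxE rmorphM mulrCA. Qed.
Lemma vdotNl (u v : V) : vdot (- u) v = - vdot u v.
Proof. by rewrite -scaleN1r vdotZl mulN1r. Qed.
Lemma vdotNr (u v : V) : vdot u (- v) = - vdot u v.
Proof. by rewrite -scaleN1r vdotZr rmorphN1 mulN1r. Qed.
Lemma vdotBr (u v1 v2 : V) : vdot u (v1 - v2) = vdot u v1 - vdot u v2.
Proof. by rewrite vdotDr vdotNr. Qed.
Lemma vdot0l (v : V) : vdot 0 v = 0.
Proof. by rewrite /vdot big1 // => i _; rewrite mxE mul0r. Qed.
Lemma vdot0r (v : V) : vdot v 0 = 0.
Proof. by rewrite /vdot big1 // => i _; rewrite mxE rmorph0 mulr0. Qed.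

Lemma vdotE (u v : V) : vdot u v = (v ^t* *m u) 0 0.
Proof. by rewrite /vdot mxE; apply: eq_bigr => i _; rewrite !mxE mulrC. Qed.

Lemma vdot_adjmx (A : 'M[C]_n) (u v : V) : vdot (A *m u) v = vdot u (A ^t* *m v).
Proof. by rewrite !vdotE adjmxM trmxCK mulmxA. Qed.

Lemma vdot_self (u : V) : vdot u u = (vsqn u)%:C%C.
Proof.
apply: complex_ext.
  by rewrite Re_sum /=; apply: eq_bigr => i _; case: (u i 0) => a b /=; ring.
by rewrite Im_sum /= big1 // => i _; case: (u i 0) => a b /=; ring.
Qed.

Lemma vsqn_unitarymx (A : 'M[C]_n) (u : V) :
  A ^t* *m A = 1%:M -> vsqn (A *m u) = vsqn u.
Proof.
move=> hA; have : vdot (A *m u) (A *m u) = vdot u u.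
  by rewrite vdot_adjmx mulmxA hA mul1mx.
by rewrite !vdot_self => /(congr1 (@complex.Re R)).
Qed.

Lemma vdot_self_eq0 (u : V) : vdot u u = 0 -> u = 0.
Proof.
rewrite vdot_self => /(congr1 (@complex.Re R)) /= /eqP.
rewrite psumr_eq0; last by move=> k _; exact: (nsq_ge0 (u k 0)).
move=> /allP u0; apply/matrixP => i j; rewrite (ord1 j) mxE.
move: (u0 i (mem_index_enum _)) => /implyP /(_ isT) /eqP.
case: (u i 0) => a b /= hab; apply: complex_ext => /=;
  by apply/eqP; rewrite -sqrf_eq0; apply/eqP; nra.
Qed.

Lemma vdot_inj (u v : V) : (forall c, vdot c u = vdot c v) -> u = v.
Proof.
move=> h; apply/eqP; rewrite -subr_eq0; apply/eqP; apply: vdot_self_eq0.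
by rewrite vdotBr h subrr.
Qed.

Lemma vdot_bound (u v : V) :
  `|complex.Re (vdot u v)| <= (vsqn u + vsqn v) / 2 /\
  `|complex.Im (vdot u v)| <= (vsqn u + vsqn v) / 2.
Proof.
rewrite /vdot /vsqn Re_sum Im_sum -big_split /= mulr_suml.
split; (apply: le_trans (ler_norm_sum _ _ _) _; apply: ler_sum => i _);
case: (u i 0) => a b; case: (v i 0) => c d /=; rewrite ler_norml;
have h1 := sqr_ge0 (a + c); have h2 := sqr_ge0 (b + d);
have h3 := sqr_ge0 (a - c); have h4 := sqr_ge0 (b - d);
have h5 := sqr_ge0 (a + d); have h6 := sqr_ge0 (b + c);
have h7 := sqr_ge0 (a - d); have h8 := sqr_ge0 (b - c);
apply/andP; split; nra.
Qed.

Lemma nsq_lin_le (a b x y : C) :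
  nsq (a * x + b * y) <= 2 * (nsq a * nsq x + nsq b * nsq y).
Proof.
case: a => a1 a2; case: b => b1 b2; case: x => x1 x2; case: y => y1 y2; rewrite /nsq /=.
set p1 := a1 * x1 - a2 * x2; set p2 := a1 * x2 + a2 * x1.
set q1 := b1 * y1 - b2 * y2; set q2 := b1 * y2 + b2 * y1.
have -> : 2 * ((a1 ^+ 2 + a2 ^+ 2) * (x1 ^+ 2 + x2 ^+ 2) +
               (b1 ^+ 2 + b2 ^+ 2) * (y1 ^+ 2 + y2 ^+ 2)) =
          2 * (p1 ^+ 2 + p2 ^+ 2 + q1 ^+ 2 + q2 ^+ 2) by rewrite /p1 /p2 /q1 /q2; ring.
clearbody p1 p2 q1 q2; have h1 := sqr_ge0 (p1 - q1); have h2 := sqr_ge0 (p2 - q2); nra.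
Qed.

Lemma vsqn_lin_le (a b : C) (x y : V) :
  vsqn (a *: x + b *: y) <= 2 * (nsq a * vsqn x + nsq b * vsqn y).
Proof.
rewrite /vsqn !mulr_sumr -big_split mulr_sumr; apply: ler_sum => i _.
by rewrite !mxE; exact: nsq_lin_le.
Qed.

End InnerProduct.

Section SquareSummable.
Local Open Scope classical_set_scope.
Variables (R : realType) (n : nat).
Local Notation C := R[i].
Local Notation Z := (zseq R n).
Implicit Types x y : Z.

Lemma l2_lin (a b : C) x y : l2 x -> l2 y -> l2 (fun k => a *: x k + b *: y k).
Proof.
move=> [Mx hx] [My hy]; exists (2 * (nsq a * Mx + nsq b * My)) => m.
apply: (@le_trans _ _ (zpsum (fun k => 2 * (nsq a * vsqn (x k) + nsq b * vsqn (y k))) m)).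
  by apply: ler_sum => i _; exact: vsqn_lin_le.
rewrite zpsum_mulr zpsumD !zpsum_mulr ler_pM2l // lerD // ler_wpM2l //; exact: nsq_ge0.
Qed.

Lemma l2B x y : l2 x -> l2 y -> l2 (fun k => x k - y k).
Proof.
move=> lx ly; have := l2_lin 1 (-1) lx ly.
by congr l2; apply: funext => k; rewrite scale1r scaleN1r.
Qed.

Lemma l2_finsupp x K : (forall k, (K < `|k|)%N -> x k = 0) -> l2 x.
Proof.
move=> h; exists (zpsum (fun k => vsqn (x k)) K) => m.
have [hm|hm] := leqP m K; first by apply: nondecreasing_zpsum => // k; exact: vsqn_ge0.
rewrite (@zpsum_finsupp _ _ K) ?(ltnW hm) // => k hk.
by rewrite h // /vsqn big1 // => i _; rewrite mxE /=; ring.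
Qed.

Lemma l2_shift x : l2 x -> l2 (fun k => x (k - 1)).
Proof.
move=> [M hM]; exists M => m; apply: le_trans (hM m.+1); rewrite /zpsum.
have -> : \sum_(j < (2 * m).+1) vsqn (x (j%:Z - m%:Z - 1)) =
          \sum_(j < (2 * m).+1) vsqn (x (j%:Z - m.+1%:Z)).
  by apply: eq_bigr => j _; congr (vsqn (x _)); lia.
have hle : ((2 * m).+1 <= (2 * m.+1).+1)%N by lia.
rewrite (big_ord_widen _ (fun j : nat => vsqn (x (j%:Z - m.+1%:Z))) hle).
by rewrite big_mkcond; apply: ler_sum => i _; case: ifP => _ //; exact: vsqn_ge0.
Qed.

Lemma l2_terms_cvg0 x : l2 x ->
  (fun m : nat => vsqn (x m%:Z)) @ \oo --> 0 /\
  (fun m : nat => vsqn (x (- m%:Z))) @ \oo --> 0.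
Proof. by move=> [M hM]; exact: (zpsum_terms_cvg0 (fun k => vsqn_ge0 (x k)) hM). Qed.

Lemma vdot_l2_terms_cvg0 x y : l2 x -> l2 y ->
  [/\ (fun m : nat => complex.Re (vdot (x m%:Z) (y m%:Z))) @ \oo --> 0,
      (fun m : nat => complex.Im (vdot (x m%:Z) (y m%:Z))) @ \oo --> 0,
      (fun m : nat => complex.Re (vdot (x (- m%:Z)) (y (- m%:Z)))) @ \oo --> 0 &
      (fun m : nat => complex.Im (vdot (x (- m%:Z)) (y (- m%:Z)))) @ \oo --> 0].
Proof.
move=> /l2_terms_cvg0 [xp xn] /l2_terms_cvg0 [yp yn].
have half (u v : nat -> R) : u @ \oo --> 0 -> v @ \oo --> 0 ->
    (fun m => (u m + v m) / 2) @ \oo --> 0.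
  move=> hu hv; have lim : (fun m => (u m + v m) / 2) @ \oo --> ((0 + 0) / 2 : R).
    exact: cvgM (cvgD hu hv) (cvg_cst _).
  by rewrite addr0 mul0r in lim.
have bp := half _ _ xp yp; have bn := half _ _ xn yn.
by split; [apply: (cvg0_norm_le _ bp) | apply: (cvg0_norm_le _ bp)
          | apply: (cvg0_norm_le _ bn) | apply: (cvg0_norm_le _ bn)] => m;
  [exact: (vdot_bound _ _).1 | exact: (vdot_bound _ _).2
  | exact: (vdot_bound _ _).1 | exact: (vdot_bound _ _).2].
Qed.

Lemma l2_locally_cst_eq0 x : l2 x ->
  (forall k : int, k != 0 -> x k = x (k + 1)) -> x = fun=> 0.
Proof.
move=> lx hx; have [tp tn] := l2_terms_cvg0 lx.
have xpos m : x m.+1%:Z = x 1.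
  by elim: m => [//|m IH]; rewrite -IH (hx m.+1%:Z) //; congr x; lia.
have xneg m : x (- m%:Z) = x 0.
  elim: m => [//|m IH]; rewrite -IH (hx (- m.+1%:Z)) ?oppr_eq0 //; congr x; lia.
have x1 : x 1 = 0.
  apply: vdot_self_eq0; rewrite vdot_self (@eventually_cst_cvg0 _ _ 1 (vsqn (x 1)) _ tp) //.
  by case=> // m _; rewrite xpos.
have x0 : x 0 = 0.
  apply: vdot_self_eq0; rewrite vdot_self (@eventually_cst_cvg0 _ _ 0 (vsqn (x 0)) _ tn) //.
  by move=> m _; rewrite xneg.
apply: funext => -[[|m]|m]; first by rewrite x0.
  by rewrite xpos x1.
by rewrite NegzE xneg x0.
Qed.

End SquareSummable.

Section InnerProductL2.
Local Open Scope classical_set_scope.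
Variables (R : realType) (n : nat).
Local Notation Z := (zseq R n).
Implicit Types x y : Z.

Definition ipsum x y := zpsum (fun k => vdot (x k) (y k)).

Lemma Re_ip x y : complex.Re (ip x y) = limn (fun m => complex.Re (ipsum x y m)).
Proof. by []. Qed.
Lemma Im_ip x y : complex.Im (ip x y) = limn (fun m => complex.Im (ipsum x y m)).
Proof. by []. Qed.

Lemma is_cvg_ip x y : l2 x -> l2 y ->
  cvgn (fun m => complex.Re (ipsum x y m)) /\ cvgn (fun m => complex.Im (ipsum x y m)).
Proof.
move=> [Mx hx] [My hy].
have hb m : zpsum (fun k => (vsqn (x k) + vsqn (y k)) / 2) m <= (Mx + My) / 2.
  rewrite (@eq_zpsum _ _ (fun k => 2^-1 * (vsqn (x k) + vsqn (y k)))) => [|k]; last exact: mulrC.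
  by rewrite zpsum_mulr zpsumD mulrC ler_pM2r ?invr_gt0 // lerD.
have -> : (fun m => complex.Re (ipsum x y m)) = zpsum (fun k => complex.Re (vdot (x k) (y k))).
  by apply: funext => m; rewrite /ipsum /zpsum Re_sum.
have -> : (fun m => complex.Im (ipsum x y m)) = zpsum (fun k => complex.Im (vdot (x k) (y k))).
  by apply: funext => m; rewrite /ipsum /zpsum Im_sum.
by split; apply: (is_cvg_zpsum_dom _ hb) => k; case: (vdot_bound (x k) (y k)).
Qed.

Lemma ip_finsupp x y K : (forall k, (K < `|k|)%N -> vdot (x k) (y k) = 0) ->
  ip x y = ipsum x y K.
Proof.
move=> /zpsum_finsupp e; apply: complex_ext; rewrite ?Re_ip ?Im_ip;
  by apply: cvg_lim => //; apply: (@cvg_eventually_cst _ _ K) => m hm; rewrite /ipsum e.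
Qed.

Lemma ipB_eq_lim x y x' y' (a : R[i]) (e : nat -> R[i]) :
  l2 x -> l2 y -> l2 x' -> l2 y' ->
  (forall m, ipsum x y m.+1 - ipsum x' y' m.+1 = a + e m) ->
  (fun m => complex.Re (e m)) @ \oo --> 0 -> (fun m => complex.Im (e m)) @ \oo --> 0 ->
  ip x y - ip x' y' = a.
Proof.
move=> lx ly lx' ly' h eRe eIm.
have [cR cI] := is_cvg_ip lx ly; have [cR' cI'] := is_cvg_ip lx' ly'.
apply: complex_ext; rewrite ?ReB ?ImB ?Re_ip ?Im_ip.
- by apply: (limnB_shift_eq cR cR' _ eRe) => m; rewrite -ReB h ReD.
- by apply: (limnB_shift_eq cI cI' _ eIm) => m; rewrite -ImB h ImD.
Qed.

End InnerProductL2.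

Section BoundaryCoordinates.
Local Open Scope classical_set_scope.
Variables (R : realType) (n : nat).
Local Notation C := R[i].
Local Notation V := 'cV[C]_n.
Local Notation Z := (zseq R n).
Implicit Types (f g z w : Z) (k : int).

(* For [(f, Sf)] with [f_k = x_(k-1) - x_k], [zcoord] and [wcoord] recover
   [x_(k-1)] and [x_k]; [fcoord] and [gcoord] invert them. *)
Definition zcoord f g : Z := fun k => (2 * 'i)^-1 *: (g k + 'i *: f k).
Definition wcoord f g : Z := fun k => (2 * 'i)^-1 *: (g k - 'i *: f k).
Definition fcoord z w : Z := fun k => z k - w k.
Definition gcoord z w : Z := fun k => 'i *: (z k + w k).

(* The chained pairs of l2 sequences form the graph of the adjoint of [S]. *)
Definition chained f g := forall k, k != 0 -> wcoord f g k = zcoord f g (k + 1).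

Lemma fcoordE f g k : f k = zcoord f g k - wcoord f g k.
Proof.
rewrite /zcoord /wcoord -scalerBr.
have -> : g k + 'i *: f k - (g k - 'i *: f k) = (2 * 'i) *: f k.
  by rewrite opprB addrC addrA addrNK mulrDl mul1r scalerDl.
by rewrite scalerA mulVf ?scale1r // mul2i_neq0.
Qed.

Lemma gcoordE f g k : g k = 'i *: (zcoord f g k + wcoord f g k).
Proof.
rewrite /zcoord /wcoord -scalerDr.
have -> : g k + 'i *: f k + (g k - 'i *: f k) = 2 *: g k.
  by rewrite addrACA subrr addr0 scaler_nat mulr2n.
rewrite !scalerA.
have -> : 'i * ((2 * 'i)^-1 * 2) = 1 :> C by field; exact: neq0Ci.
by rewrite scale1r.
Qed.

Lemma gcoordK f g : gcoord (zcoord f g) (wcoord f g) = g.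
Proof. by apply: funext => k; rewrite /gcoord -gcoordE. Qed.

Lemma zcoordK z w : zcoord (fcoord z w) (gcoord z w) = z.
Proof.
apply: funext => k; rewrite /zcoord /fcoord /gcoord -scalerDr.
have -> : z k + w k + (z k - w k) = 2 *: z k.
  by rewrite addrACA subrr addr0 scaler_nat mulr2n.
rewrite !scalerA.
have -> : (2 * 'i)^-1 * ('i * 2) = 1 :> C by field; exact: neq0Ci.
by rewrite scale1r.
Qed.

Lemma wcoordK z w : wcoord (fcoord z w) (gcoord z w) = w.
Proof.
apply: funext => k; rewrite /wcoord /fcoord /gcoord -scalerBr.
have -> : z k + w k - (z k - w k) = 2 *: w k.
  by rewrite opprB addrC addrA addrNK scaler_nat mulr2n.
rewrite !scalerA.
have -> : (2 * 'i)^-1 * 'i * 2 = 1 :> C by field; exact: neq0Ci.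
by rewrite scale1r.
Qed.

Lemma l2_zcoord f g : l2 f -> l2 g -> l2 (zcoord f g).
Proof.
move=> lf lg; have := l2_lin ((2 * 'i)^-1) ((2 * 'i)^-1 * 'i) lg lf.
by congr l2; apply: funext => k; rewrite /zcoord scalerDr scalerA.
Qed.

Lemma l2_wcoord f g : l2 f -> l2 g -> l2 (wcoord f g).
Proof.
move=> lf lg; have := l2_lin ((2 * 'i)^-1) (- ((2 * 'i)^-1 * 'i)) lg lf.
by congr l2; apply: funext => k; rewrite /wcoord scalerDr scalerN scalerA scaleNr.
Qed.

Lemma vdot_boundary_form (z w z' w' : V) :
  vdot ('i *: (z + w)) (z' - w') - vdot (z - w) ('i *: (z' + w')) =
  2 * 'i * (vdot z z' - vdot w w').
Proof. by rewrite vdotZl vdotZr conjc_i !(vdotDl, vdotNl, vdotDr, vdotNr); ring. Qed.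

Lemma vdot_gf_coord f g f' g' k :
  vdot (g k) (f' k) - vdot (f k) (g' k) =
  2 * 'i * (vdot (zcoord f g k) (zcoord f' g' k) - vdot (wcoord f g k) (wcoord f' g' k)).
Proof.
rewrite (gcoordE f g) (fcoordE f' g') (fcoordE f g) (gcoordE f' g').
exact: vdot_boundary_form.
Qed.

Lemma ipsum_gf_coord f g f' g' m :
  ipsum g f' m - ipsum f g' m =
  2 * 'i * zpsum (fun k => vdot (zcoord f g k) (zcoord f' g' k) -
                           vdot (wcoord f g k) (wcoord f' g' k)) m.
Proof. by rewrite -zpsumB -zpsum_mulr; apply: eq_zpsum => k; exact: vdot_gf_coord. Qed.

Lemma zpsum_chained (z w z' w' : Z) :
  (forall k, k != 0 -> w k = z (k + 1)) -> (forall k, k != 0 -> w' k = z' (k + 1)) ->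
  forall m, (1 <= m)%N ->
  zpsum (fun k => vdot (z k) (z' k) - vdot (w k) (w' k)) m =
  vdot (z 1) (z' 1) - vdot (w 0) (w' 0) +
  (vdot (z (- m%:Z)) (z' (- m%:Z)) - vdot (w m%:Z) (w' m%:Z)).
Proof.
move=> hw hw'; elim=> [//|[_ _|m IH _]].
  rewrite zpsumS zpsum0 (hw (-1)) // (hw' (-1)) // (hw 1) // (hw' 1) //=.
  by rewrite (_ : -1 + 1 = 0) // (_ : 1 + 1 = 2) //; ring.
rewrite zpsumS IH // (hw (- m.+2%:Z)) ?oppr_eq0 // (hw' (- m.+2%:Z)) ?oppr_eq0 //.
rewrite (hw m.+1%:Z) // (hw' m.+1%:Z) //.
rewrite (_ : - m.+2%:Z + 1 = - m.+1%:Z); last by lia.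
by rewrite (_ : m.+1%:Z + 1 = m.+2%:Z); [ring | lia].
Qed.

Lemma green_identity f g f' g' : l2 f -> l2 g -> l2 f' -> l2 g' ->
  chained f g -> chained f' g' ->
  ip g f' - ip f g' = 2 * 'i *
    (vdot (zcoord f g 1) (zcoord f' g' 1) - vdot (wcoord f g 0) (wcoord f' g' 0)).
Proof.
move=> lf lg lf' lg' r r'.
have [t1 t2 _ _] := vdot_l2_terms_cvg0 (l2_wcoord lf lg) (l2_wcoord lf' lg').
have [_ _ s3 s4] := vdot_l2_terms_cvg0 (l2_zcoord lf lg) (l2_zcoord lf' lg').
have scaled_diff0 (u v : nat -> R) (k : R) : u @ \oo --> 0 -> v @ \oo --> 0 ->
    (fun m => k * (u m.+1 - v m.+1)) @ \oo --> 0.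
  move=> hu hv; have lim : (fun m => k * (u m - v m)) @ \oo --> k * (0 - 0).
    exact: cvgM (cvg_cst _) (cvgB hu hv).
  by rewrite subr0 mulr0 -(cvg_shiftS (fun m => k * (u m - v m))) in lim.
apply: (ipB_eq_lim lg lf' lf lg' (e := fun m => 2 * 'i *
  (vdot (zcoord f g (- m.+1%:Z)) (zcoord f' g' (- m.+1%:Z)) -
   vdot (wcoord f g m.+1%:Z) (wcoord f' g' m.+1%:Z)))).
- by move=> m; rewrite ipsum_gf_coord (zpsum_chained r r') // mulrDr.
- by under eq_cvg do rewrite Re_mul2i ImB; exact: scaled_diff0 s4 t2.
- by under eq_cvg do rewrite Im_mul2i ReB; exact: scaled_diff0 s3 t1.
Qed.

End BoundaryCoordinates.

Section TestSequences.
Variables (R : realType) (n : nat).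
Local Notation V := 'cV[R[i]]_n.
Local Notation Z := (zseq R n).
Implicit Types (f g : Z) (a b j : int) (c d : V).

Definition delta_seq a c : Z := fun k => if k == a then c else 0.

Lemma zpsum_vdot_delta_l a c (y : Z) K : (`|a| <= K)%N ->
  zpsum (fun k => vdot (delta_seq a c k) (y k)) K = vdot c (y a).
Proof.
move=> ha; rewrite -(zpsum_delta (vdot c (y a)) ha); apply: eq_zpsum => k.
by rewrite /delta_seq; case: eqP => [->|_]; rewrite ?vdot0l.
Qed.

Lemma zpsum_vdot_delta_r a c (y : Z) K : (`|a| <= K)%N ->
  zpsum (fun k => vdot (y k) (delta_seq a c k)) K = vdot (y a) c.
Proof.
move=> ha; rewrite -(zpsum_delta (vdot (y a) c) ha); apply: eq_zpsum => k.
by rewrite /delta_seq; case: eqP => [->|_]; rewrite ?vdot0r.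
Qed.

Lemma delta_seq_supp a b c d k : (maxn `|a| `|b| < `|k|)%N ->
  delta_seq a c k = 0 /\ delta_seq b d k = 0.
Proof. by move=> hk; rewrite /delta_seq; split; case: eqP => // ek; move: hk; rewrite ek; lia. Qed.

Lemma ip_delta_l a b c d f g :
  ip (gcoord (delta_seq a c) (delta_seq b d)) f - ip (fcoord (delta_seq a c) (delta_seq b d)) g =
  2 * 'i * (vdot c (zcoord f g a) - vdot d (wcoord f g b)).
Proof.
have supp := @delta_seq_supp a b c d.
rewrite (@ip_finsupp _ _ _ _ (maxn `|a| `|b|)) => [|k /supp [da db]]; last first.
  by rewrite /gcoord da db addr0 scaler0 vdot0l.
rewrite (@ip_finsupp _ _ _ _ (maxn `|a| `|b|)) => [|k /supp [da db]]; last first.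
  by rewrite /fcoord da db subr0 vdot0l.
rewrite ipsum_gf_coord zcoordK wcoordK zpsumB.
by rewrite (zpsum_vdot_delta_l _ (zcoord f g) (leq_maxl _ _))
           (zpsum_vdot_delta_l _ (wcoord f g) (leq_maxr _ _)).
Qed.

Lemma ip_delta_r a b c d f g :
  ip g (fcoord (delta_seq a c) (delta_seq b d)) - ip f (gcoord (delta_seq a c) (delta_seq b d)) =
  2 * 'i * (vdot (zcoord f g a) c - vdot (wcoord f g b) d).
Proof.
have supp := @delta_seq_supp a b c d.
rewrite (@ip_finsupp _ _ _ _ (maxn `|a| `|b|)) => [|k /supp [da db]]; last first.
  by rewrite /fcoord da db subr0 vdot0r.
rewrite (@ip_finsupp _ _ _ _ (maxn `|a| `|b|)) => [|k /supp [da db]]; last first.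
  by rewrite /gcoord da db addr0 scaler0 vdot0r.
rewrite ipsum_gf_coord zcoordK wcoordK zpsumB.
by rewrite (zpsum_vdot_delta_r _ _ (leq_maxl _ _)) (zpsum_vdot_delta_r _ _ (leq_maxr _ _)).
Qed.

Lemma S_graph_delta j c : j != 0 ->
  S_graph (fcoord (delta_seq (j + 1) c) (delta_seq j c)) (gcoord (delta_seq (j + 1) c) (delta_seq j c)).
Proof.
move=> hj; have shift : (fun k => delta_seq j c (k - 1)) = delta_seq (j + 1) c.
  by apply: funext => k; rewrite /delta_seq (_ : (k - 1 == j) = (k == j + 1)) //; apply/eqP/eqP; lia.
exists (delta_seq j c); split; [|split; [|split]].
- apply: (@l2_finsupp _ _ _ `|j|) => k hk.
  by rewrite /delta_seq; case: eqP => // ek; move: hk; rewrite ek ltnn.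
- by rewrite /delta_seq eq_sym (negbTE hj).
- by rewrite -shift.
- by rewrite -shift.
Qed.

Lemma chained_of_orth_deltas f g :
  (forall j c, j != 0 ->
     ip (gcoord (delta_seq (j + 1) c) (delta_seq j c)) f -
     ip (fcoord (delta_seq (j + 1) c) (delta_seq j c)) g = 0) ->
  chained f g.
Proof.
move=> H k hk; apply: vdot_inj => c.
by move: (H k c hk); rewrite ip_delta_l => /mul2i_eq0 /eqP; rewrite subr_eq0 eq_sym => /eqP.
Qed.

(* [(bdry_f c d, bdry_g c d)] is the pair with [w_0 = c], [z_1 = d] and all
   other coordinates zero; it lies in the graph of the adjoint of [S]. *)
Definition bdry_f c d : Z := fcoord (delta_seq 1 d) (delta_seq 0 c).
Definition bdry_g c d : Z := gcoord (delta_seq 1 d) (delta_seq 0 c).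

Lemma l2_bdry c d : l2 (bdry_f c d) /\ l2 (bdry_g c d).
Proof.
split; apply: (@l2_finsupp _ _ _ 1) => k /(@delta_seq_supp 1 0 d c) [e1 e0].
  by rewrite /bdry_f /fcoord e1 e0 subr0.
by rewrite /bdry_g /gcoord e1 e0 addr0 scaler0.
Qed.

Lemma chained_bdry c d : chained (bdry_f c d) (bdry_g c d).
Proof.
move=> k hk; rewrite zcoordK wcoordK /delta_seq (negbTE hk).
by case: eqP => // /eqP; rewrite -subr_eq0 addrK (negbTE hk).
Qed.

Lemma zcoord_bdry c d : zcoord (bdry_f c d) (bdry_g c d) 1 = d.
Proof. by rewrite zcoordK. Qed.

Lemma wcoord_bdry c d : wcoord (bdry_f c d) (bdry_g c d) 0 = c.
Proof. by rewrite wcoordK. Qed.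

Lemma ip_bdry_l c d f g : ip (bdry_g c d) f - ip (bdry_f c d) g =
  2 * 'i * (vdot d (zcoord f g 1) - vdot c (wcoord f g 0)).
Proof. exact: ip_delta_l. Qed.

Lemma ip_bdry_r c d f g : ip g (bdry_f c d) - ip f (bdry_g c d) =
  2 * 'i * (vdot (zcoord f g 1) d - vdot (wcoord f g 0) c).
Proof. exact: ip_delta_r. Qed.

End TestSequences.

Section SpanningSubspace.
Local Open Scope sesquilinear_scope.
Variables (R : realType) (n : nat).
Local Notation C := R[i].
Local Notation V := 'cV[C]_n.

Lemma vdot_mulmx_ker k (A : 'M[C]_(n, k)) (u : 'rV[C]_n) (x : 'cV[C]_k) :
  u *m A = 0 -> vdot (A *m x) (u ^t*) = 0.
Proof. by move=> hu; rewrite vdotE trmxCK mulmxA hu mul0mx mxE. Qed.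

Variable Q : V -> Prop.
Hypotheses (Q0 : Q 0) (Qlin : forall k b b', Q b -> Q b' -> Q (k *: b + b'))
  (Qorth : forall c, (forall b, Q b -> vdot b c = 0) -> c = 0).

Lemma subspace_rank_grow k (A : 'M[C]_(n, k)) : (forall y, Q (A *m y)) ->
  (\rank A < n)%N -> exists2 q, Q q & (\rank A < \rank (row_mx A q))%N.
Proof.
move=> QA rA; have : kermx A != 0 by rewrite -mxrank_eq0 mxrank_ker subn_eq0 -ltnNge.
move=> /rowV0Pn [u]; rewrite sub_kermx => /eqP uA u0.
have [q Qq qc] : exists2 q, Q q & vdot q (u ^t*) != 0.
  apply: contrapT => no_q; move/eqP: u0; apply.
  rewrite -[u]trmxCK (Qorth (c := u ^t*)) ?trmx0 ?map_mx0 // => b Qb.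
  by apply/eqP/negPn/negP => bc; apply: no_q; exists b.
exists q => //; have hsub : (A^T <= (row_mx A q)^T)%MS.
  by rewrite tr_row_mx; have := submx_refl (col_mx A^T q^T); rewrite col_mx_sub => /andP[].
have [rle req] := mxrank_leqif_sup hsub; rewrite !mxrank_tr in rle req.
rewrite ltn_neqAle rle andbT req; apply: contra qc => sub_qA.
rewrite tr_row_mx col_mx_sub submx_refl /= in sub_qA; case/submxP: sub_qA => x hx.
by rewrite -[q]trmxK hx trmx_mul trmxK vdot_mulmx_ker.
Qed.

Lemma subspace_full b : Q b.
Proof.
have span r : (r <= n)%N -> exists k (A : 'M[C]_(n, k)),
    (forall y, Q (A *m y)) /\ (r <= \rank A)%N.
  elim: r => [_|r IH lt_rn]; first by exists 0%N, 0; split => // y; rewrite mul0mx.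
  have [k [A [QA rA]]] := IH (ltnW lt_rn).
  have [ltrA|leAr] := ltnP r (\rank A); first by exists k, A.
  have [q Qq grow] := subspace_rank_grow QA (leq_ltn_trans leAr lt_rn).
  exists (k + 1)%N, (row_mx A q); split; last exact: leq_ltn_trans rA grow.
  move=> y; rewrite -[y]vsubmxK mul_row_col (mx11_scalar (dsubmx y)) mul_mx_scalar addrC.
  exact: Qlin.
have [k [A [QA rA]]] := span n (leqnn n).
have /submxP [x hx] : (b^T <= A^T)%MS.
  by apply: submx_full; rewrite /row_full mxrank_tr eqn_leq rank_leq_row.
by rewrite -[b]trmxK hx trmx_mul trmxK.
Qed.

End SpanningSubspace.

Lemma mxrank_intertwine (F : fieldType) n (A B S : 'M[F]_n) :
  S \in unitmx -> A *m S = S *m B -> \rank A = \rank B.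
Proof.
move=> uS e; rewrite -(@mxrankMfree _ _ _ _ A S) ?row_free_unit // e.
by rewrite (eqmxMfull B _) // row_full_unit.
Qed.

(* [P a b] stands for "[(w_0, z_1) = (a, b)] are the boundary values of a vector
   in the domain of a self-adjoint extension commuting with [J]": a
   [(J_-, J_+)]-invariant maximal isotropic subspace for the boundary form
   [<z_1, z_1'> - <w_0, w_0'>] of [green_identity]. *)
Section LagrangianRelation.
Variables (R : realType) (n : nat).
Local Notation C := R[i].
Local Notation V := 'cV[C]_n.
Variables (Jm Jp : 'M[C]_n) (P : V -> V -> Prop).
Hypotheses (P0 : P 0 0)
  (Plin : forall k a b a' b', P a b -> P a' b' -> P (k *: a + a') (k *: b + b'))
  (Piso : forall a b a' b', P a b -> P a' b' -> vdot b' b = vdot a' a)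
  (Pmax : forall c d, (forall a b, P a b -> vdot b c = vdot a d) -> P d c)
  (PJ : forall a b, P a b -> P (Jm *m a) (Jp *m b)).

Lemma lagrangian_total : forall b, exists a, P a b.
Proof.
apply: (@subspace_full R n (fun b => exists a, P a b)) => [|k b1 b2 [a Pa] [a' Pa']|c orth_c].
- by exists 0.
- by exists (k *: a + a'); exact: Plin.
have P0c : P 0 c by apply: Pmax => a b Pab; rewrite vdot0r; apply: orth_c; exists a.
by apply: vdot_self_eq0; rewrite (Piso P0c P0c) vdot0l.
Qed.

Lemma lagrangian_functional a a' b : P a b -> P a' b -> a = a'.
Proof.
move=> Pa Pa'; have := Plin (-1) Pa' Pa; rewrite !scaleN1r addNr [- a' + a]addrC => P_diff.
apply/eqP; rewrite -subr_eq0; apply/eqP; apply: vdot_self_eq0.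
by rewrite -(Piso P_diff P_diff) vdot0l.
Qed.

Lemma lagrangian_mx : exists Vm : 'M[C]_n, forall b, P (Vm *m b) b.
Proof.
pose a j := sval (cid (lagrangian_total (delta_mx j 0))).
have Pa j : P (a j) (delta_mx j 0) := svalP (cid (lagrangian_total (delta_mx j 0))).
exists (\matrix_(i, j) a j i 0) => b.
have -> : \matrix_(i, j) a j i 0 *m b = \sum_(j < n) b j 0 *: a j.
  apply/matrixP => i k; rewrite (ord1 k) !mxE summxE.
  by apply: eq_bigr => j _; rewrite !mxE mulrC.
rewrite [X in P _ X](matrix_sum_delta b); under [X in P _ X]eq_bigr do rewrite big_ord1.
apply: (big_ind2 P) => // [x1 x2 y1 y2 h1 h2|j _].
  by have := Plin 1 h1 h2; rewrite !scale1r.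
by have := Plin (b j 0) (Pa j) P0; rewrite !addr0.
Qed.

Lemma rank_eq_of_lagrangian : \rank (1%:M - Jp) = \rank (1%:M - Jm).
Proof.
have [Vm PV] := lagrangian_mx.
have VJ : Jm *m Vm = Vm *m Jp.
  apply/matrixP => i j; have := lagrangian_functional (PJ (PV (delta_mx j 0))) (PV (Jp *m delta_mx j 0)).
  by rewrite !mulmxA -!colE => /(congr1 (fun M : 'cV[C]_n => M i 0)); rewrite !mxE.
have Vu : Vm \in unitmx.
  rewrite -unitmx_tr -row_free_unit -kermx_eq0; apply/rowV0P => v.
  rewrite sub_kermx => /eqP vV; have P0v : P 0 v^T.
    by have := PV v^T; rewrite -[Vm]trmxK -trmx_mul vV trmx0.
  apply: trmx_inj; rewrite trmx0; apply: vdot_self_eq0.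
  by rewrite (Piso P0v P0v) vdot0l.
apply/esym/(mxrank_intertwine Vu).
by rewrite mulmxBl mulmxBr mul1mx mulmx1 VJ.
Qed.

End LagrangianRelation.

Section FundamentalSymmetry.
Local Open Scope sesquilinear_scope.
Variables (R : realType) (n : nat).
Local Notation C := R[i].
Implicit Types J : 'M[C]_n.

Lemma fund_sym_adj J : fund_sym J -> J ^t* = J.
Proof. by move=> [h _]; rewrite -map_trmx. Qed.

Lemma fund_sym_unitary J : fund_sym J -> J ^t* *m J = 1%:M.
Proof. by move=> hJ; rewrite fund_sym_adj // hJ.2. Qed.

Definition sign_diag r s : 'M[C]_(r + s) := block_mx (-1%:M) 0 0 1%:M.

(* Gram-Schmidt on [(1 - J) N] and its orthogonal complement: the rows of [X]
   are an orthonormal basis diagonalising [J] with eigenvalues [-1] then [1]. *)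
Lemma fund_sym_diag J : fund_sym J ->
  exists r s (X : 'M[C]_(r + s, n)),
    [/\ r = \rank (1%:M - J), s = (n - \rank (1%:M - J)%R)%N,
        X *m X ^t* = 1%:M & X *m J = sign_diag r s *m X].
Proof.
move=> hJ; have JJ := hJ.2; have Ja := fund_sym_adj hJ.
exists _, _, (schmidt_complete (1%:M - J)); split => //.
- exact: rank_ortho.
- by apply/unitarymxP; exact: schmidt_complete_unitarymx.
rewrite /schmidt_complete /sign_diag mul_col_mx mul_block_col !mul0mx addr0 add0r mul1mx mulNmx mul1mx.
congr col_mx.
  have : (schmidt (row_base (1%:M - J)) <= 1%:M - J)%MS.
    by rewrite (eqmx_schmidt_free (row_base_free _)) eq_row_base.
  by move=> /submxP [E ->]; rewrite -mulmxA mulmxBl mul1mx JJ -mulmxN opprB.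
set Y := schmidt _; have : Y *m (1%:M - J) ^t* = 0.
  apply/orthomx1P; rewrite /Y (eqmx_schmidt_free (row_base_free _)) eq_row_base.
  exact: submx_refl.
have -> : (1%:M - J) ^t* = 1%:M - J by rewrite linearB /= trmx1 map_mxB map_mx1 Ja.
by rewrite mulmxBr mulmx1 => /eqP; rewrite subr_eq0 => /eqP.
Qed.

Lemma unitary_intertwine_diag r s (X Y : 'M[C]_(r + s, n)) Jm Jp :
  (r + s)%N = n -> Jm ^t* = Jm ->
  X *m X ^t* = 1%:M -> Y *m Y ^t* = 1%:M ->
  X *m Jm = sign_diag r s *m X -> Y *m Jp = sign_diag r s *m Y ->
  exists U : 'M[C]_n, [/\ U ^t* *m U = 1%:M, U *m U ^t* = 1%:M & Jm *m U = U *m Jp].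
Proof.
move=> rsn Jma uX uY iX iY.
have unit_sq (W : 'M[C]_(r + s, n)) : W *m W ^t* = 1%:M -> W ^t* *m W = 1%:M.
  by move: W; rewrite rsn => W /mulmx1C.
have Da : (sign_diag r s) ^t* = sign_diag r s.
  rewrite /sign_diag tr_block_mx map_block_mx; congr block_mx; apply/matrixP => i j;
  by rewrite !mxE ?rmorphN ?rmorphMn ?rmorph1 ?rmorph0 ?(eq_sym i j).
have hX : Jm *m X ^t* = X ^t* *m sign_diag r s.
  by rewrite -Jma -adjmxM iX adjmxM Da.
exists (X ^t* *m Y); split.
- by rewrite adjmxM trmxCK mulmxA -(mulmxA _ X) uX mulmx1 unit_sq.
- by rewrite adjmxM trmxCK -mulmxA (mulmxA Y) uY mul1mx unit_sq.
- by rewrite mulmxA hX -mulmxA -iY mulmxA.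
Qed.

Lemma fund_sym_unitary_similar Jm Jp : fund_sym Jm -> fund_sym Jp ->
  \rank (1%:M - Jp) = \rank (1%:M - Jm) ->
  exists U : 'M[C]_n, [/\ U ^t* *m U = 1%:M, U *m U ^t* = 1%:M & Jm *m U = U *m Jp].
Proof.
move=> hm hp hr.
have [rm [sm [X [erm esm uX iX]]]] := fund_sym_diag hm.
have [rp [sp [Y [erp esp uY iY]]]] := fund_sym_diag hp.
rewrite hr in erp esp; subst rm sm rp sp.
apply: (unitary_intertwine_diag _ (fund_sym_adj hm) uX uY iX iY).
by rewrite subnKC // rank_leq_col.
Qed.

End FundamentalSymmetry.

Section SymmetryAction.
Variables (R : realType) (n : nat) (Jm Jp : 'M[R[i]]_n).
Local Notation V := 'cV[R[i]]_n.
Local Notation Z := (zseq R n).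
Implicit Types (f g : Z) (c d : V).

Definition Jat (k : int) := if k <= 0 then Jm else Jp.

Lemma JopE f k : Jop Jm Jp f k = Jat k *m f k.
Proof. by rewrite /Jop /Jat; case: ifP. Qed.

Lemma Jat_step (k : int) : k != 0 -> Jat (k + 1) = Jat k.
Proof. by move=> /eqP k0; rewrite /Jat (_ : (k + 1 <= 0) = (k <= 0)) //; apply/idP/idP; lia. Qed.

Lemma l2_Jop f : fund_sym Jm -> fund_sym Jp -> l2 f -> l2 (Jop Jm Jp f).
Proof.
move=> hm hp [M hM]; exists M => m; rewrite (@eq_zpsum _ _ (fun k => vsqn (f k))) //.
by move=> k; rewrite JopE /Jat; case: ifP => _; rewrite vsqn_unitarymx ?fund_sym_unitary.
Qed.

Lemma zcoord_Jop f g k : zcoord (Jop Jm Jp f) (Jop Jm Jp g) k = Jat k *m zcoord f g k.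
Proof. by rewrite /zcoord !JopE -scalemxAr mulmxDr scalemxAr. Qed.

Lemma wcoord_Jop f g k : wcoord (Jop Jm Jp f) (Jop Jm Jp g) k = Jat k *m wcoord f g k.
Proof. by rewrite /wcoord !JopE -scalemxAr mulmxBr scalemxAr. Qed.

Lemma chained_Jop f g : chained f g -> chained (Jop Jm Jp f) (Jop Jm Jp g).
Proof. by move=> r k k0; rewrite zcoord_Jop wcoord_Jop r // (Jat_step k0). Qed.

Lemma Jop_bdry c d :
  Jop Jm Jp (bdry_f c d) = bdry_f (Jm *m c) (Jp *m d) /\
  Jop Jm Jp (bdry_g c d) = bdry_g (Jm *m c) (Jp *m d).
Proof.
split; apply: funext => k; rewrite JopE /Jat.
- rewrite /bdry_f /fcoord /delta_seq.
  have [->|k0] := eqVneq k 0; first by rewrite /= !sub0r mulmxN.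
  have [->|k1] := eqVneq k 1; first by rewrite /= !subr0.
  by rewrite subr0; case: ifP => _; rewrite mulmx0.
- rewrite /bdry_g /gcoord /delta_seq.
  have [->|k0] := eqVneq k 0; first by rewrite /= !add0r scalemxAr.
  have [->|k1] := eqVneq k 1; first by rewrite /= !addr0 scalemxAr.
  by rewrite addr0 scaler0; case: ifP => _; rewrite mulmx0.
Qed.

End SymmetryAction.

Section SelfAdjointExtension.
Variables (R : realType) (n : nat) (B : op R n).
Local Notation V := 'cV[R[i]]_n.
Hypotheses (saB : selfadjoint B) (extB : extends_S B).

Lemma selfadjoint_ip_sym f u : dom B f -> dom B u -> ip (act B f) u = ip f (act B u).
Proof. by move=> df du; have [_ [_ ]] := (saB.2 u (act B u)).2 (conj du erefl); apply. Qed.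

Lemma selfadjoint_chained u : dom B u -> chained u (act B u).
Proof.
move=> du; apply: chained_of_orth_deltas => j c j0.
have [ds <-] := extB (S_graph_delta c j0).
by rewrite selfadjoint_ip_sym // subrr.
Qed.

Definition boundary_rel (a b : V) := forall u, dom B u ->
  vdot (zcoord u (act B u) 1) b = vdot (wcoord u (act B u) 0) a.

Lemma boundary_relP a b :
  boundary_rel a b <-> dom B (bdry_f a b) /\ act B (bdry_f a b) = bdry_g a b.
Proof.
have [lf lg] := l2_bdry a b; split => [Pab|[de ae] u du].
  apply/saB.2; do 2!split => //; move=> u du; apply/eqP.
  by rewrite -subr_eq0 ip_bdry_r Pab // subrr mulr0.
move: (selfadjoint_ip_sym du de); rewrite ae => /eqP; rewrite -subr_eq0 ip_bdry_r.
by move/eqP/mul2i_eq0/eqP; rewrite subr_eq0 => /eqP.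
Qed.

Lemma boundary_rel_dom u : dom B u ->
  boundary_rel (wcoord u (act B u) 0) (zcoord u (act B u) 1).
Proof.
move=> du v dv; have [lv lBv] := saB.1 v dv; have [lu lBu] := saB.1 u du.
move: (green_identity lv lBv lu lBu (selfadjoint_chained dv) (selfadjoint_chained du)).
by rewrite (selfadjoint_ip_sym dv du) subrr => /esym/mul2i_eq0/eqP; rewrite subr_eq0 => /eqP.
Qed.

Lemma rank_eq_of_selfadjoint_ext (Jm Jp : 'M[R[i]]_n) : J_commutes Jm Jp B ->
  \rank (1%:M - Jp) = \rank (1%:M - Jm).
Proof.
move=> JB; apply: (@rank_eq_of_lagrangian R n Jm Jp boundary_rel).
- by move=> u du; rewrite !vdot0r.
- by move=> k a b a' b' Pab Pab' u du; rewrite vdotDr vdotZr (Pab u du) (Pab' u du) vdotDr vdotZr.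
- move=> a b a' b' Pab /boundary_relP [de ae].
  by move: (Pab _ de); rewrite ae zcoord_bdry wcoord_bdry.
- by move=> c d H u du; apply: H; exact: boundary_rel_dom.
- move=> a b /boundary_relP [de ae]; apply/boundary_relP.
  have [dJ aJ] := JB _ de; have [Jf Jg] := Jop_bdry Jm Jp a b.
  by rewrite Jf in dJ aJ; rewrite -aJ ae Jg.
Qed.

End SelfAdjointExtension.

Lemma chained_functional (R : realType) n (f g g' : zseq R n) : l2 f -> l2 g -> l2 g' ->
  chained f g -> chained f g' -> g = g'.
Proof.
move=> lf lg lg' r r'.
have wd k : wcoord f g k - wcoord f g' k = zcoord f g k - zcoord f g' k.
  have swap (T : zmodType) (a b c e : T) : a - b = c - e -> b - e = a - c.
    by move=> h; rewrite -[a](subrK b) h addrAC [c - e]addrC addrK addrC.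
  by apply: swap; rewrite -!fcoordE.
have d0 : (fun k => zcoord f g k - zcoord f g' k) = fun=> 0.
  apply: l2_locally_cst_eq0 => [|j j0]; first by apply: l2B; exact: l2_zcoord.
  by rewrite /= -[LHS]wd (r j j0) (r' j j0).
have ez : zcoord f g = zcoord f g'.
  by apply: funext => k; apply/eqP; rewrite -subr_eq0 (congr1 (@^~ k) d0).
have ew : wcoord f g = wcoord f g'.
  by apply: funext => k; apply/eqP; rewrite -subr_eq0 wd (congr1 (@^~ k) d0).
by rewrite -(gcoordK f g) -(gcoordK f g') ez ew.
Qed.

Section UnitaryExtension.
Local Open Scope sesquilinear_scope.
Variables (R : realType) (n : nat) (U : 'M[R[i]]_n).
Local Notation Z := (zseq R n).
Implicit Types f g : Z.

Definition uext_graph f g :=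
  [/\ l2 f, l2 g, chained f g & wcoord f g 0 = U *m zcoord f g 1].

(* The action is junk ([f] itself) off the domain. *)
Definition uext : op R n :=
  Op (fun f => exists g, uext_graph f g)
     (fun f => if pselect (exists g, uext_graph f g) is left p then sval (cid p) else f).

Lemma uextP f g : (dom uext f /\ act uext f = g) <-> uext_graph f g.
Proof.
rewrite /=; case: pselect => [p|np]; last first.
  by split=> [[[g' gr'] _]|gr]; exfalso; apply: np; [exists g' | exists g].
have gp := svalP (cid p); split=> [[_ <-] //|gr]; split; first by exists g.
have [lf lgp rp _] := gp; have [_ lg r _] := gr.
exact: chained_functional lf lgp lg rp r.
Qed.

Lemma uext_dom f : dom uext f -> uext_graph f (act uext f).
Proof. by move=> df; apply/uextP. Qed.

Lemma S_graph_uext f g : S_graph f g -> uext_graph f g.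
Proof.
move=> [x [lx [x0 [-> ->]]]].
have ez : zcoord (fun k => x (k - 1) - x k) (fun k => Complex 0 1 *: (x (k - 1) + x k)) =
  fun k => x (k - 1) := zcoordK (fun k => x (k - 1)) x.
have ew : wcoord (fun k => x (k - 1) - x k) (fun k => Complex 0 1 *: (x (k - 1) + x k)) =
  x := wcoordK (fun k => x (k - 1)) x.
rewrite /uext_graph /chained ez ew; split.
- by apply: l2B => //; exact: l2_shift.
- have := l2_lin 'i 'i (l2_shift lx) lx.
  by congr l2; apply: funext => k; rewrite scalerDr.
- by move=> k _; rewrite addrK.
- by rewrite /= subrr x0 mulmx0.
Qed.

Hypotheses (uU : U ^t* *m U = 1%:M) (Uu : U *m U ^t* = 1%:M).

Lemma uext_adj_graph g h : adj_graph uext g h <-> uext_graph g h.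
Proof.
split => [[lg [lh H]]|[lg lh rg eg]]; last first.
  split; [|split] => // f /uext_dom [lf lBf rf ef].
  move: (green_identity lf lBf lg lh rf rg).
  by rewrite ef eg vdot_adjmx mulmxA uU mul1mx subrr mulr0 => /eqP; rewrite subr_eq0 => /eqP.
have rg : chained g h.
  apply: chained_of_orth_deltas => j c j0.
  by have [ds <-] := (uextP _ _).2 (S_graph_uext (S_graph_delta c j0)); rewrite H // subrr.
split => //; have zw b : vdot b (zcoord g h 1) = vdot (U *m b) (wcoord g h 0).
  have [lf lg'] := l2_bdry (U *m b) b.
  have [de ae] := (uextP _ _).2 (And4 lf lg' (chained_bdry _ _)
                                 (etrans (wcoord_bdry _ _) (congr1 _ (esym (zcoord_bdry _ _))))).
  move: (H _ de); rewrite ae => /eqP; rewrite -subr_eq0 ip_bdry_l.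
  by move/eqP/mul2i_eq0/eqP; rewrite subr_eq0 => /eqP.
have -> : zcoord g h 1 = U ^t* *m wcoord g h 0 by apply: vdot_inj => b; rewrite zw vdot_adjmx.
by rewrite mulmxA Uu mul1mx.
Qed.

Lemma uext_selfadjoint : selfadjoint uext.
Proof.
split=> [f /uext_dom [] //|g h].
by rewrite uext_adj_graph; split => /uextP.
Qed.

Lemma uext_extends_S : extends_S uext.
Proof. by move=> f g /S_graph_uext /uextP. Qed.

Lemma uext_J_commutes Jm Jp : fund_sym Jm -> fund_sym Jp -> Jm *m U = U *m Jp ->
  J_commutes Jm Jp uext.
Proof.
move=> hm hp JU u /uext_dom [lu lBu ru eu].
have /uextP [] // : uext_graph (Jop Jm Jp u) (Jop Jm Jp (act uext u)).
split; [exact: l2_Jop | exact: l2_Jop | exact: chained_Jop |].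
by rewrite zcoord_Jop wcoord_Jop eu /Jat lexx ler10 /= !mulmxA JU.
Qed.

End UnitaryExtension.

Theorem corollary3p5 (R : realType) (n : nat) (Jm Jp : 'M[complex R]_n) :
  fund_sym Jm -> fund_sym Jp -> J_commutes_S Jm Jp ->
  (exists B : op R n, selfadjoint B /\ extends_S B /\ J_commutes Jm Jp B) <->
  \rank (1%:M - Jp) = \rank (1%:M - Jm).
Proof.
(* [J_commutes_S] holds for every such [J], because [x_0 = 0]. *)
move=> hm hp _; split=> [[B [saB [extB JB]]]|/(fund_sym_unitary_similar hm hp) [U [uU Uu JU]]].
  exact: (rank_eq_of_selfadjoint_ext saB extB JB).
exists (uext U); split; first exact: uext_selfadjoint.
by split; [exact: uext_extends_S | exact: uext_J_commutes].
Qed.
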